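(* Let $R$ be a commutative ring with unity in which every zero divisor is harmless. Then every B-irreducible element of $R$ is irreducible.
   Context: A zero divisor $r$ of $R$ is called harmless if there exists a unit $u\in R$ with $r=1-u$. An element $r\in R$ is called irreducible if whenever $r=ab$ with $a,b\in R$, then $a$ is a unit or $b$ is a unit. A non-zero, non-unit element $r\in R$ is called B-irreducible if the principal ideal $(r)$ is a maximal element, with respect to inclusion, of the set of all proper principal ideals of $R$. *)

From HB Require Import structures.
From mathcomp Require Import all_boot all_algebra.
Set Implicit Arguments. Unset Strict Implicit. Unset Printing Implicit Defensive.
Import GRing.Theory.
Local Open Scope ring_scope.

(* Commutative ring with unity (possibly the zero ring): comPzRingType. *)
Section Defs.
Variable R : comPzRingType.

Definition is_unit (u : R) : Prop := exists v : R, u * v = 1.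

Definition zero_divisor (r : R) : Prop := exists s : R, s != 0 /\ r * s = 0.

Definition harmless (r : R) : Prop := exists u : R, is_unit u /\ r = 1 - u.

Definition irreducible_elt (r : R) : Prop :=
  forall a b : R, r = a * b -> is_unit a \/ is_unit b.

Definition in_principal (s x : R) : Prop := exists c : R, x = s * c.

Definition pideal_sub (a b : R) : Prop := forall x, in_principal a x -> in_principal b x.

Definition pideal_proper (s : R) : Prop := ~ (forall x, in_principal s x).

Definition B_irreducible (r : R) : Prop :=
  r != 0 /\ ~ is_unit r /\
  forall s : R, pideal_proper s -> pideal_sub r s -> pideal_sub s r.

End Defs.

(* If r = a b with a a nonunit, then (r) <= (a) is proper, so maximality of (r)
   gives a = r c = a (b c).  Hence a (1 - b c) = 0 with a <> 0 (as r <> 0), so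
   1 - b c is a zero divisor, hence harmless: 1 - b c = 1 - u for a unit u.
   Thus b c = u is a unit, and so is b. *)
From Stdlib Require Import Classical.
From mathcomp Require Import all_boot all_algebra.
Set Implicit Arguments. Unset Strict Implicit. Unset Printing Implicit Defensive.
Local Open Scope ring_scope.
Import GRing.Theory.

Section PrincipalIdeals.
Variable R : comPzRingType.
Implicit Types a b c : R.

Lemma in_principal_self a : in_principal a a.
Proof. by exists 1; rewrite mulr1. Qed.

Lemma pideal_proper_nonunit a : ~ is_unit a -> pideal_proper a.
Proof. by move=> nua all1; apply: nua; have [c /esym ac1] := all1 1; exists c. Qed.

Lemma pideal_sub_mulr a b : pideal_sub (a * b) a.
Proof. by move=> _ [c ->]; exists (b * c); rewrite mulrA. Qed.

Lemma is_unit_mulr b c : is_unit (b * c) -> is_unit b.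
Proof. by case=> v bcv; exists (c * v); rewrite mulrA. Qed.

Lemma harmless_subr_unit b : harmless (1 - b) -> is_unit b.
Proof. by case=> u [ua /(addrI 1)/oppr_inj ->]. Qed.

Lemma zero_divisor_subr_fix a b : a != 0 -> a = a * b -> zero_divisor (1 - b).
Proof.
move=> a0 ab; exists a; split=> //.
by rewrite mulrC mulrBr mulr1 -ab subrr.
Qed.

End PrincipalIdeals.

Theorem mainTheorem2 (R : comPzRingType) :
  (forall r : R, zero_divisor r -> harmless r) ->
  forall r : R, B_irreducible r -> irreducible_elt r.
Proof.
move=> zd_harmless r [r0 [_ r_max]] a b rab.
have [ua | nua] := classic (is_unit a); [by left | right].
have [c a_rc] : in_principal r a.
  apply: (r_max a (pideal_proper_nonunit nua)); last exact: in_principal_self.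
  by rewrite rab; apply: pideal_sub_mulr.
have a0 : a != 0 by apply: contraNneq r0 => a0; rewrite rab a0 mul0r.
have a_fix : a = a * (b * c) by rewrite mulrA -rab.
apply: (@is_unit_mulr _ _ c); apply: harmless_subr_unit.
exact: zd_harmless _ (zero_divisor_subr_fix a0 a_fix).
Qed.
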